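(* The values of $k(n)$ for $1\le n\le 9$ are: $k(1)=1$, $k(2)=k(3)=k(4)=2$, and $k(5)=k(6)=k(7)=k(8)=k(9)=3$.
   Context: The GKS game with parameter $n$ (a positive integer). A strategy pair $(S,T)$ consists of a function $S$ assigning a bit in $\{0,1\}$ to every sequence $\pi_1\pi_2\ldots\pi_i$ of distinct elements of $[n]=\{1,\dots,n\}$ with $1\le i\le n-1$, and a function $T:\{0,1\}^n\to 2^{[n]}$. For a permutation $\pi=\pi_1\ldots\pi_n$ of $[n]$ and a bit $b$, the final array $A_{\rm final}\in\{0,1\}^n$ is defined by $A_{\rm final}[\pi_i]=S(\pi_1\ldots\pi_i)$ for $1\le i\le n-1$ and $A_{\rm final}[\pi_n]=b$. The pair $(S,T)$ is a $(k,n)$ strategy if for every permutation $\pi$ of $[n]$ and every bit $b$ we have $\pi_n\in T(A_{\rm final})$, and moreover $|T(\sigma)|\le k$ for every $\sigma\in\{0,1\}^n$. $k(n)$ denotes the minimum $k$ such that a $(k,n)$ strategy exists. *)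

From mathcomp Require Import all_boot.
Unset Printing Implicit Defensive.

(* [n] = {1,...,n} is represented by 'I_n = {0,...,n-1}.
   A permutation pi = pi_1 ... pi_n of [n] is a sequence pi : seq 'I_n
   with perm_eq pi (enum 'I_n).
   S assigns a bit to every sequence of elements of [n]; only its values on
   sequences of distinct elements of length 1..n-1 are ever used. *)

Definition gks_S n := seq 'I_n -> bool.
Definition gks_T n := {ffun 'I_n -> bool} -> {set 'I_n}.

(* The final array: A[pi_i] = S(pi_1..pi_i) for i <= n-1, A[pi_n] = b.
   pi_i is the element at (0-based) position i-1, so for y = pi_i,
   index y pi = i-1. *)
Definition A_final (n : nat) (S : gks_S n) (pi : seq 'I_n) (b : bool)
  : {ffun 'I_n -> bool} :=
  [ffun y => if (index y pi).+1 == size pi then b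
             else S (take (index y pi).+1 pi)].

Definition is_strategy (k n : nat) (S : gks_S n) (T : gks_T n) : Prop :=
  (forall (pi : seq 'I_n) (b : bool), perm_eq pi (enum 'I_n) ->
     forall (p : seq 'I_n) (x : 'I_n), pi = rcons p x ->
       x \in T (@A_final n S pi b))
  /\ (forall sigma : {ffun 'I_n -> bool}, #|T sigma| <= k).

Definition strategy_exists (k n : nat) : Prop :=
  exists (S : gks_S n) (T : gks_T n), is_strategy k n S T.

Definition is_k_of (n k : nat) : Prop :=
  strategy_exists k n /\ (forall k', strategy_exists k' n -> k <= k').

From mathcomp Require Import all_boot.

(* Upper bound: for n <= m^2, split the cells into m blocks of at most m cells and let
   S write 1 exactly on the cell that completes its block.  In the final array every
   block has a single 1, on its last written cell, except the block of the last cell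
   pi_n, whose only possible 1 is b itself.  So T answers the unique all-zero block if
   there is one, and otherwise the cells that are the only 1 of their block; either set
   has at most m elements and contains pi_n.

   Lower bound: a strategy for n + 1 cells yields one for n cells (write an extra cell
   first), so it suffices to show k(2) >= 2 and k(5) >= 3.  After some cells have been
   written, tabulate for every array w on the remaining cells the set of remaining cells
   that can still be written last with outcome w.  The table of a position is the union,
   over the next cell, of the tables of the resulting positions lifted by one cell, so
   an exhaustive search enumerates all tables in which every row has at most K
   candidates; for (K, n) = (1, 2) and (2, 5) there is none. *)

Set Implicit Arguments.
Unset Strict Implicit.
Unset Printing Implicit Defensive.

Fixpoint orseq (s t : seq bool) : seq bool :=
  match s, t with
  | a :: s', b :: t' => (a || b) :: orseq s' t'
  | [::], _ => t
  | _, [::] => s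
  end.

Lemma size_orseq s t : size (orseq s t) = maxn (size s) (size t).
Proof. by elim: s t => [|a s IH] [|b t] //=; rewrite ?max0n ?maxn0 // IH maxnSS. Qed.

Lemma nth_orseq s t j : nth false (orseq s t) j = nth false s j || nth false t j.
Proof. by elim: s t j => [|a s IH] [|b t] [|j] //=; rewrite orbF. Qed.

Lemma count_orseql s t : count id s <= count id (orseq s t).
Proof. by elim: s t => [|a s IH] [|b t] //=; rewrite leq_add //; case: a; case: b. Qed.

Lemma count_orseqr s t : count id t <= count id (orseq s t).
Proof. by elim: s t => [|a s IH] [|b t] //=; rewrite leq_add //; case: a; case: b. Qed.

Lemma nth_foldl_orseq acc l j :
  nth false (foldl orseq acc l) j = nth false acc j || has (fun t => nth false t j) l.
Proof. by elim: l acc => [|t l IH] acc /=; rewrite ?orbF // IH nth_orseq orbA. Qed.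

Lemma count_foldl_orseq acc l t :
  t \in l -> count id t <= count id (foldl orseq acc l).
Proof.
have count_acc acc' l' : count id acc' <= count id (foldl orseq acc' l').
  by elim: l' acc' => //= t' l' IH acc'; exact: leq_trans (count_orseql _ _) (IH _).
elim: l acc => //= t' l IH acc; rewrite inE => /predU1P[-> | /IH //].
exact: leq_trans (count_orseqr _ _) (count_acc _ _).
Qed.

Lemma size_foldl_orseq acc l :
  all (fun t => size t <= size acc) l -> size (foldl orseq acc l) = size acc.
Proof.
elim: l acc => //= t l IH acc /andP[le_t le_l].
have size_acc : size (orseq acc t) = size acc by rewrite size_orseq (maxn_idPl le_t).
by rewrite IH size_acc.
Qed.

Definition insert_nth {T : Type} i (x : T) s := take i s ++ x :: drop i s.
Definition remove_nth {T : Type} i (s : seq T) := take i s ++ drop i.+1 s.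

Section InsertRemove.
Variable T : Type.
Implicit Types (x d : T) (s : seq T).

Lemma size_insert_nth i x s : size (insert_nth i x s) = (size s).+1.
Proof. by rewrite size_cat /= addnS -size_cat cat_take_drop. Qed.

Lemma size_remove_nth i s : i < size s -> size (remove_nth i s) = (size s).-1.
Proof.
move=> lt_i; rewrite size_cat size_take size_drop lt_i.
by case: (size s) lt_i => // k; rewrite ltnS => le_ik; rewrite subSS addnBA // addKn.
Qed.

Lemma remove_insert_nth i x s : i <= size s -> remove_nth i (insert_nth i x s) = s.
Proof.
move=> le_i; rewrite /remove_nth /insert_nth take_cat size_takel // ltnn subnn cats0.
by rewrite drop_cat size_takel // ltnNge leqnSn /= subSn // subnn /= drop0 cat_take_drop.
Qed.

Lemma nth_insert_nth d i x s j : i <= size s ->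
  nth d (insert_nth i x s) j = if j == i then x else nth d s (unbump i j).
Proof.
move=> le_i; rewrite /insert_nth /unbump nth_cat size_takel //.
case: ltngtP => [lt_ji | lt_ij | ->]; last by rewrite subnn.
- by rewrite nth_take // subn0.
by case: j lt_ij => // j lt_ij; rewrite subn1 subSn //= nth_drop subnKC.
Qed.

Lemma nth_remove_nth d i s j : nth d (remove_nth i s) j = nth d s (bump i j).
Proof.
rewrite /remove_nth /bump addnC; case: (ltnP i (size s)) => [lt_i | le_i].
  rewrite nth_cat (size_takel (ltnW lt_i)); case: ltnP => lt_j.
    by rewrite nth_take // addn0.
  by rewrite nth_drop addn1 addSn subnKC.
rewrite take_oversize // drop_oversize ?cats0; last exact: leq_trans le_i _.
case: leqP => le_ij; rewrite ?addn0 // addn1 !nth_default //.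
  exact: leq_trans le_i (leq_trans le_ij (leqnSn j)).
exact: leq_trans le_i le_ij.
Qed.

End InsertRemove.

Lemma count_insert_nth i b s : count id (insert_nth i b s) = b + count id s.
Proof. by rewrite count_cat /= addnCA -count_cat cat_take_drop; case: b. Qed.

Lemma unbump_lt i j m : i < m.+1 -> j < m.+1 -> j != i -> unbump i j < m.
Proof.
rewrite /unbump ltnS => le_im lt_jm; case: (ltngtP i j) => //= [lt_ij | lt_ji] _.
  by rewrite subn1 -ltnS prednK // (leq_ltn_trans (leq0n i) lt_ij).
by rewrite subn0 (leq_trans lt_ji le_im).
Qed.

Lemma all2_map (A B C : Type) (r : B -> C -> bool) (f : A -> B) (g : A -> C) s :
  all2 r (map f s) (map g s) = all (fun x => r (f x) (g x)) s.
Proof. by elim: s => //= a s ->. Qed.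

Lemma count_id_card m (s : seq bool) : size s = m ->
  count id s = #|[set j : 'I_m | nth false s j]|.
Proof.
move=> <-; rewrite cardsE cardE /enum_mem size_filter -enumT.
rewrite -[in LHS](mkseq_nth false s) /mkseq count_map -val_enum_ord count_map.
by apply: eq_count.
Qed.

(** * Candidate tables *)

(* A table for m cells has one row per bit string of length m, in the order of
   [bitseqs m]; a row is the characteristic sequence of a set of positions. *)
Definition table := seq (seq bool).

Fixpoint bitseqs m : seq (seq bool) :=
  if m is m'.+1 then [seq b :: w | b <- [:: false; true], w <- bitseqs m']
  else [:: [::]].

Lemma mem_bitseqs m w : (w \in bitseqs m) = (size w == m).
Proof.
elim: m w => [|m IH] w; first by case: w.
apply/allpairsP/idP => [[[c v] /= [_ v_m ->]] | ]; first by rewrite /= eqSS -IH.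
by case: w => // b w w_m; exists (b, w); rewrite /= IH; case: (b) w_m.
Qed.

Definition tabulate m (F : seq bool -> seq bool) : table := [seq F w | w <- bitseqs m].

Definition table_row m (t : table) w := nth [::] t (index w (bitseqs m)).

Lemma table_row_tabulate m F w : size w = m -> table_row m (tabulate m F) w = F w.
Proof.
move=> w_m; have w_in : w \in bitseqs m by rewrite mem_bitseqs w_m.
by rewrite /table_row (nth_map [::]) ?nth_index // index_mem.
Qed.

Definition overfull K (t : table) := has (fun row => K < count id row) t.

Lemma overfull_tabulateP K m F :
  reflect (exists2 w, size w = m & K < count id (F w)) (overfull K (tabulate m F)).
Proof.
apply: (iffP hasP) => [[_ /mapP[w w_in ->]] | [w w_m]].
  by exists w => //; apply/eqP; rewrite -mem_bitseqs.
by exists (F w) => //; apply: map_f; rewrite mem_bitseqs w_m.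
Qed.

Fixpoint ortable (s t : table) : table :=
  match s, t with
  | a :: s', b :: t' => orseq a b :: ortable s' t'
  | [::], _ => t
  | _, [::] => s
  end.

Lemma overfull_foldl_ortable K acc ts :
  overfull K acc -> overfull K (foldl ortable acc ts).
Proof.
have overfull_ortable s t : overfull K s -> overfull K (ortable s t).
  elim: s t => [|a s IH] [|b t] //= /orP[lt_a | /IH ->]; last by rewrite orbT.
  by rewrite (leq_trans lt_a (count_orseql a b)).
by elim: ts acc => //= t ts IH acc /(overfull_ortable _ t); exact: IH.
Qed.

Lemma foldl_ortable_tabulate m (init : seq bool -> seq bool) (F : nat -> seq bool -> seq bool) l :
  foldl ortable (tabulate m init) [seq tabulate m (F i) | i <- l] =
  tabulate m (fun w => foldl orseq (init w) [seq F i w | i <- l]).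
Proof.
have ortable_map (G H : seq bool -> seq bool) s :
    ortable (map G s) (map H s) = map (fun w => orseq (G w) (H w)) s.
  by elim: s => //= w s ->.
elim: l init => //= i l IH init.
by rewrite ortable_map -(IH (fun w => orseq (init w) (F i w))).
Qed.

Definition lift_table m i (c : bool) (t : table) : table :=
  tabulate m (fun w => if nth false w i == c
                       then insert_nth i false (table_row m.-1 t (remove_nth i w))
                       else [::]).

Definition children m (ts : seq table) : seq (seq table) :=
  [seq [seq lift_table m i c t | c <- [:: false; true], t <- ts] | i <- iota 0 m].

Fixpoint bounded_unions K (cs : seq (seq table)) (acc : table) : seq table :=
  if cs is c :: cs' then
    flatten [seq let acc' := ortable acc t in
                 if overfull K acc' then [::] else bounded_unions K cs' acc' | t <- c]
  else [:: acc].

Lemma mem_bounded_unions K cs acc ts :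
  all2 (fun t c => t \in c) ts cs -> ~~ overfull K (foldl ortable acc ts) ->
  foldl ortable acc ts \in bounded_unions K cs acc.
Proof.
elim: cs acc ts => [|c cs IH] acc [|t ts] //=; first by rewrite inE.
case/andP=> t_in ts_in fit; apply/flatten_mapP; exists t => //.
case: ifP => [/(overfull_foldl_ortable ts) | _]; last exact: IH.
by rewrite (negbTE fit).
Qed.

Fixpoint tables K m : seq table :=
  if m is m'.+1 then
    if m' is 0 then [:: [:: [:: true]; [:: true]]]
    else undup (bounded_unions K (children m (tables K m')) (tabulate m (fun=> nseq m false)))
  else [::].

Lemma take_index_prefix (T : eqType) (g pi : seq T) u :
  u \notin g -> prefix (rcons g u) pi -> take (index u pi).+1 pi = rcons g u.
Proof.
move=> u_g /prefixP[s ->].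
by rewrite cat_rcons index_cat (negbTE u_g) /= eqxx addn0 -cat_rcons take_size_cat ?size_rcons.
Qed.

Lemma A_final_rcons n (S : gks_S n) p x b y :
  A_final n S (rcons p x) b y =
  if (y == x) && (y \notin p) then b else S (take (index y (rcons p x)).+1 (rcons p x)).
Proof.
rewrite ffunE size_rcons eqSS -cats1 index_cat.
have [y_p | y_p] := boolP (y \in p); first by rewrite ltn_eqF ?index_mem // andbF.
rewrite /= andbT [y == x]eq_sym; case: (x =P y) => [_ | _]; first by rewrite addn0 eqxx.
by rewrite addn1 (gtn_eqF (ltnSn _)).
Qed.

Section Candidates.
Variables (n : nat) (S : gks_S n.+1).

Definition remaining (g : seq 'I_n.+1) := [seq x <- enum 'I_n.+1 | x \notin g].

Lemma mem_remaining g x : (x \in remaining g) = (x \notin g).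
Proof. by rewrite mem_filter mem_enum andbT. Qed.

Lemma uniq_remaining g : uniq (remaining g).
Proof. exact: filter_uniq (enum_uniq _). Qed.

Lemma remaining_nil : remaining [::] = enum 'I_n.+1.
Proof. exact/all_filterP/allP. Qed.

Lemma perm_cat_remaining g : uniq g -> perm_eq (g ++ remaining g) (enum 'I_n.+1).
Proof.
move=> uniq_g; apply: uniq_perm => [||x]; last 1 first.
- by rewrite mem_cat mem_remaining mem_enum orbN.
- rewrite cat_uniq uniq_g uniq_remaining andbT /=.
  by apply/hasP => -[x]; rewrite mem_remaining => /negbTE ->.
- exact: enum_uniq.
Qed.

Definition child g i := rcons g (nth ord0 (remaining g) i).

Lemma remaining_child g i : i < size (remaining g) ->
  remaining (child g i) = remove_nth i (remaining g).
Proof.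
move=> lt_i; set u := nth ord0 (remaining g) i.
have -> : remaining (child g i) = filter (predC1 u) (remaining g).
  rewrite -filter_predI; apply: eq_filter => x /=.
  by rewrite mem_rcons inE negb_or andbC.
by rewrite -rem_filter ?uniq_remaining // remE index_uniq ?uniq_remaining.
Qed.

Lemma size_remaining_child g i : i < size (remaining g) ->
  size (remaining (child g i)) = (size (remaining g)).-1.
Proof. by move=> lt_i; rewrite remaining_child // size_remove_nth. Qed.

Definition branch (rec : seq 'I_n.+1 -> seq bool -> seq bool) g i w :=
  if nth false w i == S (child g i)
  then insert_nth i false (rec (child g i) (remove_nth i w))
  else [::].

Definition candidates_step rec g w :=
  let m := size (remaining g) in
  if m == 1 then [:: true]
  else foldl orseq (nseq m false) [seq branch rec g i w | i <- iota 0 m].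

(* With fuel [f = size (remaining g)], position j of [candidates f g w] is set iff the
   game continued from the written prefix [g] can end with the j-th remaining cell, the
   remaining cells receiving the values [w]. *)
Fixpoint candidates f g w :=
  if f is f'.+1 then candidates_step (candidates f') g w else [::].

Lemma candidates_branches m g w : size (remaining g) = m.+2 ->
  candidates m.+2 g w =
  foldl orseq (nseq m.+2 false) [seq branch (candidates m.+1) g i w | i <- iota 0 m.+2].
Proof. by move=> size_r; rewrite /= /candidates_step size_r. Qed.

Lemma size_candidates m g w : size (remaining g) = m.+1 -> size (candidates m.+1 g w) = m.+1.
Proof.
elim: m g w => [|m IH] g w size_r; first by rewrite /= /candidates_step size_r.
rewrite candidates_branches // size_foldl_orseq size_nseq //.
apply/allP => t /mapP[i]; rewrite mem_iota => /andP[_ lt_i] ->.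
rewrite /branch; case: ifP => // _.
by rewrite size_insert_nth IH // size_remaining_child size_r.
Qed.

Definition ends_at g x b (w : seq bool) := exists p,
  [/\ perm_eq (rcons p x) (enum 'I_n.+1), prefix g (rcons p x) &
      forall k, k < size w ->
        A_final n.+1 S (rcons p x) b (nth ord0 (remaining g) k) = nth false w k].

Lemma candidates_sound m g w j : uniq g -> size (remaining g) = m.+1 -> size w = m.+1 ->
  nth false (candidates m.+1 g w) j -> ends_at g (nth ord0 (remaining g) j) (nth false w j) w.
Proof.
elim: m g w j => [|m IH] g w j uniq_g size_r size_w.
  rewrite /= /candidates_step size_r; case: j => [_ | j]; last by rewrite /= nth_nil.
  case E: (remaining g) size_r => [|u []] // _; have u_g : u \notin g.
    by rewrite -mem_remaining E mem_head.
  exists g; split; [by rewrite -cats1 -E perm_cat_remaining | exact: prefix_rcons |].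
  by rewrite size_w E => -[|k] //= _; rewrite A_final_rcons eqxx u_g.
move=> cand_j; have lt_j : j < m.+2.
  rewrite -(size_candidates w size_r) ltnNge; apply: contraTN cand_j.
  by move/(nth_default false) ->.
move: cand_j; rewrite candidates_branches // nth_foldl_orseq nth_nseq if_same orFb.
case/hasP=> t /mapP[i]; rewrite mem_iota => /andP[_ lt_i] ->; rewrite /branch.
case: eqP => [S_child | _]; last by rewrite nth_nil.
rewrite nth_insert_nth; last by rewrite size_candidates // size_remaining_child size_r.
case: eqP => // /eqP ne_ji child_j.
set u := nth ord0 (remaining g) i.
have u_g : u \notin g by rewrite -mem_remaining mem_nth ?size_r.
have uniq_child : uniq (child g i) by rewrite rcons_uniq u_g uniq_g.
have size_rc : size (remaining (child g i)) = m.+1 by rewrite size_remaining_child size_r.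
have size_wi : size (remove_nth i w) = m.+1 by rewrite size_remove_nth size_w.
have remaining_childE k : k != i ->
    nth ord0 (remaining (child g i)) (unbump i k) = nth ord0 (remaining g) k.
  by move=> ne_ki; rewrite remaining_child ?size_r // nth_remove_nth unbumpK.
have w_childE k : k != i -> nth false (remove_nth i w) (unbump i k) = nth false w k.
  by move=> ne_ki; rewrite nth_remove_nth unbumpK.
have [p [perm_p prefix_p agree_p]] := IH _ _ _ uniq_child size_rc size_wi child_j.
rewrite remaining_childE // w_childE // in perm_p prefix_p agree_p.
exists p; split => // [|k]; first exact: prefix_trans (prefix_rcons g u) prefix_p.
rewrite size_w => lt_k; have [-> | ne_ki] := eqVneq k i; last first.
  by rewrite -(remaining_childE k) // agree_p ?w_childE ?size_wi ?unbump_lt.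
have ne_ux : u != nth ord0 (remaining g) j by rewrite nth_uniq ?uniq_remaining ?size_r // eq_sym.
by rewrite -/u A_final_rcons (negbTE ne_ux) (take_index_prefix u_g prefix_p) S_child.
Qed.

Definition candidate_table m g := tabulate m (candidates m g).

Lemma candidate_table_step m g : size (remaining g) = m.+2 ->
  candidate_table m.+2 g =
  foldl ortable (tabulate m.+2 (fun=> nseq m.+2 false))
    [seq lift_table m.+2 i (S (child g i)) (candidate_table m.+1 (child g i)) | i <- iota 0 m.+2].
Proof.
move=> size_r; rewrite /lift_table foldl_ortable_tabulate /candidate_table /tabulate.
apply/eq_in_map => w.
rewrite mem_bitseqs => /eqP size_w; rewrite candidates_branches //.
congr foldl; apply/eq_in_map => i; rewrite mem_iota => /andP[_ lt_i].
by rewrite /branch table_row_tabulate // size_remove_nth size_w.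
Qed.

Lemma overfull_child_table K m g i : size (remaining g) = m.+2 -> i < m.+2 ->
  overfull K (candidate_table m.+1 (child g i)) -> overfull K (candidate_table m.+2 g).
Proof.
move=> size_r lt_i /overfull_tabulateP[w size_w over_w]; apply/overfull_tabulateP.
exists (insert_nth i (S (child g i)) w); first by rewrite size_insert_nth size_w.
have i_in : i \in iota 0 m.+2 by rewrite mem_iota.
rewrite candidates_branches //; apply: leq_trans (count_foldl_orseq _ (map_f _ i_in)).
by rewrite /branch nth_insert_nth ?size_w // !eqxx remove_insert_nth ?size_w // count_insert_nth.
Qed.

Lemma tablesSS K m : tables K m.+2 =
  undup (bounded_unions K (children m.+2 (tables K m.+1)) (tabulate m.+2 (fun=> nseq m.+2 false))).
Proof. by []. Qed.

Lemma candidate_table_in_tables K m g : size (remaining g) = m.+1 ->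
  ~~ overfull K (candidate_table m.+1 g) -> candidate_table m.+1 g \in tables K m.+1.
Proof.
elim: m g => [|m IH] g size_r fit.
  by rewrite /candidate_table /tabulate /= /candidates_step size_r inE.
rewrite tablesSS mem_undup (candidate_table_step size_r).
apply: mem_bounded_unions; last by rewrite -candidate_table_step.
rewrite all2_map; apply/allP => i; rewrite mem_iota => /andP[_ lt_i].
apply: allpairs_f; first by case: (S _); rewrite !inE.
apply: IH; first by rewrite size_remaining_child size_r.
by apply: contra fit; apply: overfull_child_table.
Qed.
End Candidates.

Lemma tables_nil_strategy_gt K n k : tables K n.+1 = [::] -> strategy_exists k n.+1 -> K < k.
Proof.
move=> no_tables [S [T [T_correct T_small]]].
have size_r : size (remaining ([::] : seq 'I_n.+1)) = n.+1 by rewrite remaining_nil size_enum_ord.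
have /overfull_tabulateP[w size_w over_w] : overfull K (candidate_table S n.+1 [::]).
  by apply: contraT => /(candidate_table_in_tables size_r); rewrite no_tables.
pose sigma := [ffun y : 'I_n.+1 => nth false w y].
have cand_T (j : 'I_n.+1) : nth false (candidates S n.+1 [::] w) j -> j \in T sigma.
  move/(candidates_sound (g := [::]) isT size_r size_w); rewrite remaining_nil nth_ord_enum.
  case=> p [perm_p _ agree_p].
  suff -> : sigma = A_final n.+1 S (rcons p j) (nth false w j) by exact: T_correct perm_p _ _ erefl.
  by apply/ffunP => y; rewrite ffunE -agree_p ?size_w // remaining_nil nth_ord_enum.
apply: leq_trans over_w (leq_trans _ (T_small sigma)).
rewrite (count_id_card (size_candidates _ w size_r)); apply: subset_leq_card.
by apply/subsetP => j; rewrite inE; exact: cand_T.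
Qed.

(** * Monotonicity in the number of cells *)

Section Restriction.
Variables (n : nat) (S : gks_S n.+1) (T : gks_T n.+1).

Definition restrict_S : gks_S n := fun h => S (ord_max :: map (lift ord_max) h).

Definition extend_array (sigma : {ffun 'I_n -> bool}) : {ffun 'I_n.+1 -> bool} :=
  [ffun j => if unlift ord_max j is Some i then sigma i else S [:: ord_max]].

Definition restrict_T : gks_T n := fun sigma => lift ord_max @^-1: T (extend_array sigma).

Lemma perm_lift_max (pi : seq 'I_n) : perm_eq pi (enum 'I_n) ->
  perm_eq (ord_max :: map (lift ord_max) pi) (enum 'I_n.+1).
Proof.
move=> perm_pi; apply: uniq_perm => [||j]; last 1 first.
- rewrite mem_enum inE; case: (unliftP ord_max j) => [i -> | ->]; last by rewrite eqxx.
  by rewrite mem_map ?(perm_mem perm_pi) ?mem_enum ?orbT //; exact: lift_inj.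
- rewrite /= (map_inj_uniq (@lift_inj _ _)) (perm_uniq perm_pi) enum_uniq andbT.
  by apply/mapP => -[i _ /eqP]; rewrite (negbTE (neq_lift _ _)).
- exact: enum_uniq.
Qed.

Lemma A_final_lift_max (p : seq 'I_n) x b :
  A_final n.+1 S (rcons (ord_max :: map (lift ord_max) p) (lift ord_max x)) b =
  extend_array (A_final n restrict_S (rcons p x) b).
Proof.
have lift_max_neq i : (lift ord_max i == ord_max) = false.
  by rewrite eq_sym (negbTE (neq_lift _ _)).
apply/ffunP => j; rewrite [RHS]ffunE A_final_rcons.
case: (unliftP ord_max j) => [i -> | ->]; last first.
  by rewrite [ord_max == _]eq_sym lift_max_neq /= eqxx take0.
rewrite A_final_rcons inE lift_max_neq (inj_eq (@lift_inj _ _)) (mem_map (@lift_inj _ _)) /=.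
rewrite [ord_max == _]eq_sym lift_max_neq -map_rcons index_map; last exact: lift_inj.
by rewrite /restrict_S map_take.
Qed.

Lemma restrict_strategy k : is_strategy k n.+1 S T -> is_strategy k n restrict_S restrict_T.
Proof.
case=> T_correct T_small; split => [pi b perm_pi p x pi_px | sigma].
  have := T_correct _ b (perm_lift_max perm_pi) (ord_max :: map (lift ord_max) p) (lift ord_max x).
  by rewrite pi_px map_rcons -rcons_cons A_final_lift_max inE; apply.
rewrite -(card_imset _ (@lift_inj _ ord_max)); apply: leq_trans (T_small (extend_array sigma)).
by apply: subset_leq_card; apply/subsetP => y /imsetP[i]; rewrite inE => ? ->.
Qed.
End Restriction.

Lemma strategy_exists_le k m n : m <= n -> strategy_exists k n -> strategy_exists k m.
Proof.
move/subnK <-; elim: (n - m) => // d IH [S [T strat]].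
by apply: IH; exists (restrict_S S), (restrict_T S T); exact: restrict_strategy.
Qed.

(** * The block strategy *)

Section BlockStrategy.
Variables (m n : nat).
Hypotheses (m_gt0 : 0 < m) (n_le : n <= m * m).

Definition block (y : 'I_n) := y %/ m.

Definition block_S : gks_S n := fun h =>
  if h is a :: h' then [forall z, (block z == block (last a h')) ==> (z \in h)] else false.

Definition silent_block (sigma : {ffun 'I_n -> bool}) y :=
  [forall z, (block z == block y) ==> ~~ sigma z].

Definition lonely_one (sigma : {ffun 'I_n -> bool}) y :=
  sigma y && [forall z, (block z == block y) && (z != y) ==> ~~ sigma z].

Definition block_T : gks_T n := fun sigma =>
  if [pick y | silent_block sigma y] is Some y0 then [set z | block z == block y0]
  else [set y | lonely_one sigma y].

Lemma block_S_take (s : seq 'I_n) y : y \in s ->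
  block_S (take (index y s).+1 s) =
  [forall z, (block z == block y) ==> (z \in take (index y s).+1 s)].
Proof.
move=> y_s; rewrite (take_nth y) ?index_mem // nth_index //.
by case: (take _ s) => [|a t] //=; rewrite last_rcons.
Qed.

Lemma card_block y0 : #|[set z | block z == block y0]| <= m.
Proof.
pose f (z : 'I_n) : 'I_m := Ordinal (ltn_pmod z m_gt0).
rewrite -(card_in_imset (f := f)); first by rewrite (leq_trans (max_card _)) ?card_ord.
move=> a c; rewrite !inE => /eqP a_y0 /eqP c_y0 /(congr1 val) /= ac.
by apply: val_inj; rewrite /= (divn_eq a m) (divn_eq c m) -/(block a) -/(block c) a_y0 c_y0 ac.
Qed.

Lemma card_lonely_ones sigma : #|[set y | lonely_one sigma y]| <= m.
Proof.
have block_lt (z : 'I_n) : block z < m by rewrite ltn_divLR // (leq_trans (ltn_ord z)).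
pose f (z : 'I_n) : 'I_m := Ordinal (block_lt z).
rewrite -(card_in_imset (f := f)); first by rewrite (leq_trans (max_card _)) ?card_ord.
move=> a c; rewrite !inE => /andP[_ /forallP a_lonely] /andP[sigma_c _] /(congr1 val) /= ac.
apply/eqP; apply: contraT => ne_ac.
by have := a_lonely c; rewrite ac eqxx eq_sym ne_ac sigma_c.
Qed.

Lemma card_block_T sigma : #|block_T sigma| <= m.
Proof. by rewrite /block_T; case: pickP => [y0 _|_]; rewrite ?card_block ?card_lonely_ones. Qed.

Section Play.
Variables (pi p : seq 'I_n) (x : 'I_n) (b : bool).
Hypotheses (perm_pi : perm_eq pi (enum 'I_n)) (pi_px : pi = rcons p x).

Let sigma := A_final n block_S pi b.

Let mem_pi z : z \in pi.
Proof. by rewrite (perm_mem perm_pi) mem_enum. Qed.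

Let x_notin_p : x \notin p.
Proof. by move: (perm_uniq perm_pi); rewrite enum_uniq pi_px rcons_uniq => /andP[]. Qed.

Lemma final_last : sigma x = b.
Proof. by rewrite /sigma pi_px A_final_rcons eqxx x_notin_p. Qed.

Lemma final_other y : y != x ->
  sigma y = [forall z, (block z == block y) ==> (index z pi <= index y pi)].
Proof.
move=> ne_yx; rewrite /sigma pi_px A_final_rcons (negbTE ne_yx) -pi_px block_S_take //.
by apply: eq_forallb => z; rewrite in_take.
Qed.

Lemma final_block_of_last y : y != x -> block y = block x -> sigma y = false.
Proof.
move=> ne_yx same_block; have y_p : y \in p.
  by move: (mem_pi y); rewrite pi_px mem_rcons inE (negbTE ne_yx).
apply/negbTE; rewrite final_other // negb_forall; apply/existsP; exists x.
rewrite -same_block eqxx /= -ltnNge pi_px -cats1 !index_cat (negbTE x_notin_p) y_p.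
by rewrite /= eqxx addn0 index_mem.
Qed.

Lemma final_other_block y : block y != block x -> exists2 y', block y' = block y & sigma y'.
Proof.
move=> ne_block.
have [y' /eqP same_block y'_max] :=
  @arg_maxnP _ y (fun z => block z == block y) (index^~ pi) (eqxx _).
exists y' => //; have ne_y'x : y' != x.
  by apply: contraNneq ne_block => <-; rewrite same_block.
rewrite final_other //; apply/forallP => z; apply/implyP => /eqP z_block.
by apply: y'_max; rewrite z_block same_block.
Qed.

Lemma block_T_correct : x \in block_T sigma.
Proof.
rewrite /block_T; case: pickP => [y0 silent | no_silent].
  rewrite inE; apply: contraT => ne_block.
  have [y' same_block sigma_y'] : exists2 y', block y' = block y0 & sigma y'.
    by apply: final_other_block; rewrite eq_sym.
  by move/forallP: silent => /(_ y'); rewrite same_block eqxx sigma_y'.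
have b_true : b.
  apply: contraT => b_false; rewrite -(no_silent x).
  apply/forallP => z; apply/implyP => /eqP z_block.
  by have [-> | ne_zx] := eqVneq z x; rewrite ?final_last ?final_block_of_last.
rewrite inE /lonely_one final_last b_true /=.
apply/forallP => z; apply/implyP => /andP[/eqP z_block ne_zx].
by rewrite final_block_of_last.
Qed.
End Play.

Lemma block_strategy : is_strategy m n block_S block_T.
Proof.
split=> [pi b perm_pi p x pi_px | sigma]; last exact: card_block_T.
exact: (block_T_correct b perm_pi pi_px).
Qed.
End BlockStrategy.

Lemma strategy_exists_sq m n : 0 < m -> n <= m * m -> strategy_exists m n.
Proof. by move=> m_gt0 n_le; exists (@block_S m n), (@block_T m n); exact: block_strategy. Qed.

Lemma strategy_size_gt0 n k : strategy_exists k n.+1 -> 0 < k.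
Proof.
case=> S [T [T_correct T_small]].
case/lastP E: (enum 'I_n.+1) => [|p x]; first by move/(congr1 size): E; rewrite size_enum_ord.
have := T_correct _ false (perm_refl _) p x E; rewrite E => x_T.
by apply: leq_trans (T_small (A_final n.+1 S (rcons p x) false)); apply/card_gt0P; exists x.
Qed.

Lemma tables_1_2 : tables 1 2 = [::].
Proof. by vm_compute. Qed.

Lemma tables_2_5 : tables 2 5 = [::].
Proof. by vm_compute. Qed.

Lemma strategy_size_gt1 n k : 1 < n -> strategy_exists k n -> 1 < k.
Proof. by move=> lt1n /(strategy_exists_le lt1n); apply: tables_nil_strategy_gt tables_1_2. Qed.

Lemma strategy_size_gt2 n k : 4 < n -> strategy_exists k n -> 2 < k.
Proof. by move=> lt4n /(strategy_exists_le lt4n); apply: tables_nil_strategy_gt tables_2_5. Qed.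

Theorem mainTheorem10 :
  [/\ is_k_of 1 1, is_k_of 2 2, is_k_of 3 2, is_k_of 4 2 &
   [/\ is_k_of 5 3, is_k_of 6 3, is_k_of 7 3, is_k_of 8 3 & is_k_of 9 3]].
Proof.
have k_of n k : 0 < k -> n <= k * k -> (forall k', strategy_exists k' n -> k <= k') ->
    is_k_of n k.
  by move=> k_gt0 n_le k_min; split=> //; exact: strategy_exists_sq.
split; first by apply: k_of => // k'; exact: strategy_size_gt0.
- by apply: k_of => // k'; exact: strategy_size_gt1.
- by apply: k_of => // k'; exact: strategy_size_gt1.
- by apply: k_of => // k'; exact: strategy_size_gt1.
by split; apply: k_of => // k'; exact: strategy_size_gt2.
Qed.
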